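(* Let $n\geq 2$, $\gamma\geq1$, $\alpha\in\mathbb{R}$, $\beta\in\mathbb{R}$. For $p,q,s\geq 1$ define $$\theta_1=\frac{2(p+\gamma-1)}{\gamma+1-\alpha-2\beta},\qquad \theta_2=\frac{2(q-1)(p+\gamma-1)}{p+\gamma-3},$$ and for $i=1,2$ $$\kappa_i(p,q;s)=\frac{\frac{q}{s}-\frac{q}{\theta_i}}{\frac{q}{s}-\left(\frac12-\frac1n\right)},\qquad f_i(p,q;s)=\frac{\theta_i}{q}\kappa_i(p,q;s)=\frac{\frac{\theta_i}{s}-1}{\frac{q}{s}-\left(\frac12-\frac1n\right)}.$$ Then for all sufficiently large $p>1$: (i) if $\alpha+2\beta<\gamma-1+\frac{2}{n}$, one can choose $q>1$ such that $\kappa_i(p,q;\frac{n}{n-1})\in(0,1)$ and $f_i(p,q;\frac{n}{n-1})<2$ for $i=1,2$; (ii) if $\alpha+2\beta<\gamma-1+\frac{4}{n+2}$, there exists $q>1$ such that $\kappa_i(p,q;2)\in(0,1)$ and $f_i(p,q;2)<2$ for $i=1,2$. *)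

From Stdlib Require Import Reals Lra.
Open Scope R_scope.

Definition theta1 (gamma alpha beta p : R) : R :=
  2 * (p + gamma - 1) / (gamma + 1 - alpha - 2 * beta).

Definition theta2 (gamma p q : R) : R :=
  2 * (q - 1) * (p + gamma - 1) / (p + gamma - 3).

Definition kappa (n : nat) (theta q s : R) : R :=
  (q / s - q / theta) / (q / s - (1/2 - 1 / INR n)).

Definition fexp (n : nat) (theta q s : R) : R :=
  theta / q * kappa n theta q s.

Definition good (n : nat) (gamma alpha beta p q s : R) : Prop :=
  (0 < kappa n (theta1 gamma alpha beta p) q s < 1 /\
   fexp n (theta1 gamma alpha beta p) q s < 2) /\
  (0 < kappa n (theta2 gamma p q) q s < 1 /\
   fexp n (theta2 gamma p q) q s < 2).

(* Writing c = 1/2 - 1/n, both kappa and f become explicit quotients, and the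
   three requirements on an exponent theta reduce to s < theta, c theta < q and
   theta < 2q + 2s/n.  With P = p + gamma - 1 and d = gamma + 1 - alpha - 2 beta
   we have theta_1 = 2P/d, while theta_2 ~ 2q for large P, so for large p it
   suffices to take q = mP with 1/d < m < (2 + 2s/n)/4.  Such an m exists exactly
   when alpha + 2 beta < gamma + 1 - 4/(2 + 2s/n), which for s = n/(n-1) and
   s = 2 are the two hypotheses of the lemma. *)
From Stdlib Require Import Reals Lra.
Open Scope R_scope.

Definition inv_sobolev_exp (n : nat) : R := 1/2 - 1 / INR n.

Lemma inv_sobolev_exp_lt_half (n : nat) : 0 < INR n -> inv_sobolev_exp n < 1/2.
Proof.
  intro Hn; unfold inv_sobolev_exp.
  assert (0 < 1 / INR n) by (apply Rdiv_lt_0_compat; lra).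
  lra.
Qed.

Lemma kappa_eq (n : nat) (th q s : R) :
  s <> 0 -> th <> 0 -> q - inv_sobolev_exp n * s <> 0 ->
  kappa n th q s = q * (th - s) / (th * (q - inv_sobolev_exp n * s)).
Proof.
  intros Hs Hth Hq; unfold kappa; fold (inv_sobolev_exp n).
  assert (Hden : q / s - inv_sobolev_exp n = (q - inv_sobolev_exp n * s) / s)
    by (field; auto).
  rewrite Hden; field; auto.
Qed.

Lemma fexp_eq (n : nat) (th q s : R) :
  s <> 0 -> th <> 0 -> q <> 0 -> q - inv_sobolev_exp n * s <> 0 ->
  fexp n th q s = (th - s) / (q - inv_sobolev_exp n * s).
Proof.
  intros Hs Hth Hq0 Hq; unfold fexp; rewrite kappa_eq by auto.
  field; auto.
Qed.

Lemma kappa_fexp_bounds (n : nat) (th q s : R) :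
  0 < INR n -> 0 < s -> 0 < q -> inv_sobolev_exp n * s < q ->
  s < th -> inv_sobolev_exp n * th < q -> th < 2 * q + 2 * s / INR n ->
  (0 < kappa n th q s < 1) /\ fexp n th q s < 2.
Proof.
  intros Hn Hs Hq Hqs Hth Hthq Hth2.
  set (c := inv_sobolev_exp n) in *.
  assert (Hk : kappa n th q s = q * (th - s) / (th * (q - c * s)))
    by (apply kappa_eq; fold c; intro; lra).
  assert (Hk1 : 1 - kappa n th q s = s * (q - c * th) / (th * (q - c * s)))
    by (rewrite Hk; field; split; intro; lra).
  assert (Hf2 : 2 - fexp n th q s = (2 * q + 2 * s / INR n - th) / (q - c * s)).
  { assert (E : 2 * q + 2 * s / INR n - th = 2 * (q - c * s) - (th - s))
      by (unfold c, inv_sobolev_exp; field; lra).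
    rewrite fexp_eq by (fold c; intro; lra); fold c; rewrite E; field; intro; lra. }
  assert (0 < kappa n th q s) by (rewrite Hk; apply Rdiv_lt_0_compat; nra).
  assert (0 < 1 - kappa n th q s) by (rewrite Hk1; apply Rdiv_lt_0_compat; nra).
  assert (0 < 2 - fexp n th q s) by (rewrite Hf2; apply Rdiv_lt_0_compat; lra).
  lra.
Qed.

Lemma kappa_fexp_bounds_lt_twice (n : nat) (th q s : R) :
  0 < INR n -> 0 < s <= 2 -> 1 < q -> s < th -> th < 2 * q ->
  (0 < kappa n th q s < 1) /\ fexp n th q s < 2.
Proof.
  intros Hn Hs Hq Hth Hthq.
  assert (Hc := inv_sobolev_exp_lt_half n Hn).
  assert (0 < 2 * s / INR n) by (apply Rdiv_lt_0_compat; lra).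
  apply kappa_fexp_bounds; nra.
Qed.

Lemma theta2_gt (gamma p q : R) :
  2 < p + gamma - 1 -> 1 < q -> 2 * (q - 1) < theta2 gamma p q.
Proof.
  intros HP Hq; unfold theta2.
  assert (E : 2 * (q - 1) * (p + gamma - 1) / (p + gamma - 3) - 2 * (q - 1)
              = 4 * (q - 1) / (p + gamma - 3)) by (field; lra).
  assert (0 < 4 * (q - 1) / (p + gamma - 3)) by (apply Rdiv_lt_0_compat; lra).
  lra.
Qed.

Lemma theta2_lt (gamma p q e : R) :
  2 < p + gamma - 1 -> 4 * q + 2 * e < (p + gamma - 1) * (2 + e) ->
  theta2 gamma p q < 2 * q + e.
Proof.
  intros HP Hq; unfold theta2.
  assert (E : 2 * q + e - 2 * (q - 1) * (p + gamma - 1) / (p + gamma - 3)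
              = ((p + gamma - 1) * (2 + e) - (4 * q + 2 * e)) / (p + gamma - 3))
    by (field; lra).
  assert (0 < ((p + gamma - 1) * (2 + e) - (4 * q + 2 * e)) / (p + gamma - 3))
    by (apply Rdiv_lt_0_compat; lra).
  lra.
Qed.

(* With P = p + gamma - 1: (1 - 2/n) P <= P - 2 as soon as P >= n. *)
Lemma inv_sobolev_exp_mul_theta2_le (n : nat) (gamma p q : R) :
  0 < INR n -> INR n <= p + gamma - 1 -> 2 < p + gamma - 1 -> 1 <= q ->
  inv_sobolev_exp n * theta2 gamma p q <= q - 1.
Proof.
  intros Hn HnP HP Hq; unfold theta2, inv_sobolev_exp.
  assert (E : q - 1 - (1/2 - 1 / INR n) * (2 * (q - 1) * (p + gamma - 1) / (p + gamma - 3))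
              = 2 * (q - 1) * (p + gamma - 1 - INR n) / (INR n * (p + gamma - 3)))
    by (field; lra).
  assert (0 <= 2 * (q - 1) * (p + gamma - 1 - INR n) / (INR n * (p + gamma - 3))).
  { unfold Rdiv; apply Rmult_le_pos; [nra |].
    left; apply Rinv_0_lt_compat; nra. }
  lra.
Qed.

Lemma kappa_fexp_bounds_theta2 (n : nat) (gamma p q s : R) :
  0 < INR n -> 0 < s <= 2 -> INR n <= p + gamma - 1 -> 2 < p + gamma - 1 ->
  1 + s / 2 <= q ->
  4 * q + 2 * (2 * s / INR n) < (p + gamma - 1) * (2 + 2 * s / INR n) ->
  (0 < kappa n (theta2 gamma p q) q s < 1) /\ fexp n (theta2 gamma p q) q s < 2.
Proof.
  intros Hn Hs HnP HP Hq Hlt.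
  assert (Hc := inv_sobolev_exp_lt_half n Hn).
  assert (H2 := theta2_gt gamma p q HP ltac:(lra)).
  apply kappa_fexp_bounds; try lra.
  - nra.
  - assert (H := inv_sobolev_exp_mul_theta2_le n gamma p q Hn HnP HP ltac:(lra)).
    lra.
  - exact (theta2_lt gamma p q _ HP Hlt).
Qed.

Lemma lt_mul_of_div_lt (a b x : R) : 0 < b -> a / b < x -> a < x * b.
Proof.
  intros Hb H.
  apply (Rmult_lt_compat_r b) in H; [| exact Hb].
  replace (a / b * b) with a in H by (field; lra).
  exact H.
Qed.

(* The witness is q = m P with m the midpoint of (1/d, (2 + 2s/n)/4). *)
Lemma good_eventually (n : nat) (gamma alpha beta s : R) :
  0 < INR n -> 0 < s <= 2 ->
  alpha + 2 * beta < gamma + 1 - 4 / (2 + 2 * s / INR n) ->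
  exists P0 : R, forall p : R, P0 < p ->
    exists q : R, 1 < q /\ good n gamma alpha beta p q s.
Proof.
  intros Hn Hs Hab.
  set (e := 2 * s / INR n) in *.
  set (d := gamma + 1 - alpha - 2 * beta).
  assert (He : 0 < e) by (apply Rdiv_lt_0_compat; lra).
  assert (HK4 : 0 < 4 / (2 + e)) by (apply Rdiv_lt_0_compat; lra).
  assert (Hd : 0 < d) by (unfold d; lra).
  assert (HdK : 4 < d * (2 + e)) by (apply lt_mul_of_div_lt; unfold d; lra).
  assert (Hu0 : 0 < 1 / d) by (apply Rdiv_lt_0_compat; lra).
  assert (Hdinv : 1 / d * d = 1) by (field; lra).
  assert (Hinv : 1 / d < (2 + e) / 4) by nra.
  set (m := (1 / d + (2 + e) / 4) / 2).
  assert (Hgap : 0 < (2 + e) - 4 * m) by (unfold m; lra).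
  assert (Hm : 1 / d < m) by (unfold m; lra).
  assert (Hq_thr : 0 < (1 + s / 2) / m) by (apply Rdiv_lt_0_compat; lra).
  assert (He_thr : 0 < 2 * e / ((2 + e) - 4 * m)) by (apply Rdiv_lt_0_compat; lra).
  assert (Hsd : 0 < s * d) by nra.
  exists ((1 + s / 2) / m + 2 * e / ((2 + e) - 4 * m) + INR n + 2 + s * d / 2
          - (gamma - 1)).
  intros p Hp.
  set (P := p + gamma - 1).
  assert (HPq : 1 + s / 2 < P * m) by (apply lt_mul_of_div_lt; unfold P; lra).
  assert (HPe : 2 * e < P * ((2 + e) - 4 * m))
    by (apply lt_mul_of_div_lt; unfold P; lra).
  exists (P * m); split; [lra | split].
  - assert (Ht1 : theta1 gamma alpha beta p = 2 * P * (1 / d))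
      by (unfold theta1, P, d; field; fold d; lra).
    rewrite Ht1; apply kappa_fexp_bounds_lt_twice; try lra.
    + assert (s * d < 2 * P) by (unfold P; nra).
      nra.
    + assert (0 < P) by (unfold P; nra).
      nra.
  - assert (INR n <= P) by (unfold P; lra).
    assert (2 < P) by (unfold P; lra).
    apply kappa_fexp_bounds_theta2; fold P e; lra.
Qed.

Theorem lemma2p3 (n : nat) (gamma alpha beta : R) :
  (2 <= n)%nat -> 1 <= gamma ->
  (alpha + 2 * beta < gamma - 1 + 2 / INR n ->
     exists P0 : R, forall p : R, 1 < p -> P0 < p ->
       exists q : R, 1 < q /\ good n gamma alpha beta p q (INR n / (INR n - 1))) /\
  (alpha + 2 * beta < gamma - 1 + 4 / (INR n + 2) ->
     exists P0 : R, forall p : R, 1 < p -> P0 < p ->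
       exists q : R, 1 < q /\ good n gamma alpha beta p q 2).
Proof.
  intros Hn _.
  assert (Hx : 2 <= INR n) by (apply le_INR in Hn; simpl in Hn; lra).
  split; intro Hab.
  - assert (Hs : 0 < INR n / (INR n - 1) <= 2).
    { split; [apply Rdiv_lt_0_compat; lra |].
      apply Rmult_le_reg_r with (INR n - 1); [lra |].
      replace (INR n / (INR n - 1) * (INR n - 1)) with (INR n) by (field; lra).
      lra. }
    replace (gamma - 1 + 2 / INR n)
      with (gamma + 1 - 4 / (2 + 2 * (INR n / (INR n - 1)) / INR n)) in Hab
      by (field; lra).
    destruct (good_eventually n gamma alpha beta _ ltac:(lra) Hs Hab) as [P0 HP0].
    exists P0; auto.
  - replace (gamma - 1 + 4 / (INR n + 2))
      with (gamma + 1 - 4 / (2 + 2 * 2 / INR n)) in Hab by (field; lra).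
    destruct (good_eventually n gamma alpha beta 2 ltac:(lra) ltac:(lra) Hab)
      as [P0 HP0].
    exists P0; auto.
Qed.
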